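(* Let $\beta\in(1,2)$ and let $A(\beta)\subset\mathbb{R}^2$ be a planar convex body which has a centre of symmetry, is symmetric with respect to the $y$-axis, and whose boundary within $[-1,1]^2$ coincides with the graph of $y=|x|^\beta$. Then there exists a small positive constant $c$, independent of $\beta$, such that $$|K_{A(\beta)}(\theta+\pi/2,\lambda)|\approx_\beta\begin{cases}\lambda^{1/\beta} & \text{if } 0\leq|\theta|<\lambda^{\frac{\beta-1}{\beta}}<c,\\ \lambda^{1/2}|\theta|^{\frac{2-\beta}{2(\beta-1)}} & \text{if } \lambda^{\frac{\beta-1}{\beta}}\leq|\theta|<c.\end{cases}$$
   Context: For a planar convex body $C$ (compact convex set with nonempty interior), an angle $\theta$ and $\lambda>0$, with $\mathbf{u}(\theta)=(\cos\theta,\sin\theta)$, the chord is $K_C(\theta,\lambda)=\{\mathbf{x}\in C:\mathbf{x}\cdot\mathbf{u}(\theta)=\inf_{\mathbf{y}\in C}\mathbf{y}\cdot\mathbf{u}(\theta)+\lambda\}$, and $|K_C(\theta,\lambda)|$ denotes its length. The notation $f\approx_\beta g$ means there exist positive constants $c_1,c_2$ depending only on $\beta$ with $c_1 g\leq f\leq c_2 g$ on the stated range. *)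

From Stdlib Require Import Reals.
From Coquelicot Require Import Coquelicot.
Open Scope R_scope.

Definition pt := (R * R)%type.

Definition dist2 (p q : pt) : R :=
  sqrt ((fst p - fst q) ^ 2 + (snd p - snd q) ^ 2).

Definition dot (p q : pt) : R := fst p * fst q + snd p * snd q.

Definition u (theta : R) : pt := (cos theta, sin theta).

Definition is_closed2 (C : pt -> Prop) : Prop :=
  forall p, (forall eps, 0 < eps -> exists q, C q /\ dist2 p q < eps) -> C p.

Definition is_bounded2 (C : pt -> Prop) : Prop :=
  exists M, forall p, C p -> dist2 p (0, 0) <= M.

Definition is_convex2 (C : pt -> Prop) : Prop :=
  forall p q t, C p -> C q -> 0 <= t <= 1 ->
    C ((1 - t) * fst p + t * fst q, (1 - t) * snd p + t * snd q).

Definition has_interior2 (C : pt -> Prop) : Prop :=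
  exists p eps, 0 < eps /\ forall q, dist2 p q < eps -> C q.

Definition convex_body (C : pt -> Prop) : Prop :=
  is_closed2 C /\ is_bounded2 C /\ is_convex2 C /\ has_interior2 C.

Definition boundary2 (C : pt -> Prop) (p : pt) : Prop :=
  forall eps, 0 < eps ->
    (exists q, C q /\ dist2 p q < eps) /\ (exists q, ~ C q /\ dist2 p q < eps).

Definition centrally_symmetric (C : pt -> Prop) : Prop :=
  exists z : pt, forall p, C p -> C (2 * fst z - fst p, 2 * snd z - snd p).

Definition y_axis_symmetric (C : pt -> Prop) : Prop :=
  forall x y, C (x, y) -> C (- x, y).

Definition abspow (x beta : R) : R :=
  if Req_EM_T x 0 then 0 else Rpower (Rabs x) beta.

Definition boundary_is_graph (beta : R) (C : pt -> Prop) : Prop :=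
  forall x y, -1 <= x <= 1 -> -1 <= y <= 1 ->
    (boundary2 C (x, y) <-> y = abspow x beta).

Definition support_min (C : pt -> Prop) (theta : R) : R :=
  real (Glb_Rbar (fun r => exists y, C y /\ r = dot y (u theta))).

Definition chord (C : pt -> Prop) (theta lambda : R) (x : pt) : Prop :=
  C x /\ dot x (u theta) = support_min C theta + lambda.

(* length of a chord (a segment): its diameter *)
Definition chord_length (C : pt -> Prop) (theta lambda : R) : R :=
  real (Lub_Rbar (fun r => exists p q,
          chord C theta lambda p /\ chord C theta lambda q /\ r = dist2 p q)).

From Stdlib Require Import Reals Lra.
From Coquelicot Require Import Coquelicot.
Open Scope R_scope.

(* Near the origin [A] lies above the graph of [f x = |x|^b], which is its
   boundary, so the support line of slope [s = tan th] touches the graph where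
   [f' x0 = s], i.e. [x0 ~ |th|^(1/(b-1))], and up to a factor 2 the chord at
   height [lam] is the sublevel set [{x | f x - s x <= f x0 - s x0 + lam}].
   By convexity its width [w] obeys [f (x0 + w) - f x0 - f' x0 w ~ lam].  If
   [x0 <~ lam^(1/b)] the term [w^b] dominates and [w ~ lam^(1/b)]; otherwise the
   quadratic term [x0^(b-2) w^2] does, and [w ~ (lam x0^(2-b))^(1/2)], which is
   [lam^(1/2) |th|^((2-b)/(2(b-1)))]. *)

(** * Real powers *)

(* [Rpower 0 q = 1] since [ln 0 = 0]; [rpow] is [0] at nonpositive bases, as [abspow] is. *)
Definition rpow (x q : R) : R := if Rle_dec x 0 then 0 else Rpower x q.

Lemma rpow_Rpower x q : 0 < x -> rpow x q = Rpower x q.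
Proof. intros; unfold rpow; destruct (Rle_dec x 0); [lra|auto]. Qed.

Lemma rpow_nonpos x q : x <= 0 -> rpow x q = 0.
Proof. intros; unfold rpow; destruct (Rle_dec x 0); [auto|lra]. Qed.

Lemma rpow_0 q : rpow 0 q = 0.
Proof. apply rpow_nonpos; lra. Qed.

Lemma abspow_rpow x b : abspow x b = rpow (Rabs x) b.
Proof.
  unfold abspow, rpow.
  pose proof (Rabs_pos x).
  destruct (Req_EM_T x 0) as [Hx|Hx]; destruct (Rle_dec (Rabs x) 0) as [Ha|Ha]; auto.
  - subst x; rewrite Rabs_R0 in Ha; lra.
  - exfalso; apply Hx, Rabs_eq_0; lra.
Qed.

Lemma rpow_gt0 x q : 0 < x -> 0 < rpow x q.
Proof. intros; rewrite rpow_Rpower by auto; apply exp_pos. Qed.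

Lemma rpow_ge0 x q : 0 <= rpow x q.
Proof.
  destruct (Rle_or_lt x 0); [rewrite rpow_nonpos by auto; lra|].
  now apply Rlt_le, rpow_gt0.
Qed.

Lemma rpow_1 x : 0 <= x -> rpow x 1 = x.
Proof.
  intros [Hx|<-]; [rewrite rpow_Rpower by auto; apply Rpower_1; auto|apply rpow_0].
Qed.

Lemma rpow_base1 q : rpow 1 q = 1.
Proof.
  rewrite rpow_Rpower by lra. unfold Rpower. now rewrite ln_1, Rmult_0_r, exp_0.
Qed.

Lemma rpow_2 x : 0 <= x -> rpow x 2 = x * x.
Proof.
  intros [Hx|<-]; [|rewrite rpow_0; ring].
  rewrite rpow_Rpower, (Rpower_pow 2) by auto. simpl; ring.
Qed.

Lemma rpow_m1 x : 0 < x -> rpow x (-1) = / x.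
Proof. intros. replace (-1) with (- (1)) by ring. rewrite rpow_Rpower, Rpower_Ropp, Rpower_1; auto. Qed.

Lemma rpow_mult_distr x y q : 0 <= x -> 0 <= y -> rpow (x * y) q = rpow x q * rpow y q.
Proof.
  intros [Hx|<-] [Hy|<-]; rewrite ?Rmult_0_l, ?Rmult_0_r, ?rpow_0; try ring.
  rewrite !rpow_Rpower by nra. symmetry; apply Rpower_mult_distr; auto.
Qed.

Lemma rpow_rpow x p q : 0 <= x -> rpow (rpow x p) q = rpow x (p * q).
Proof.
  intros [Hx|<-]; [|now rewrite !rpow_0].
  rewrite (rpow_Rpower x), (rpow_Rpower x), rpow_Rpower by (auto; apply exp_pos).
  apply Rpower_mult.
Qed.

Lemma rpow_plus x p q : 0 < x -> rpow x (p + q) = rpow x p * rpow x q.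
Proof. intros; rewrite !rpow_Rpower; auto; apply Rpower_plus. Qed.

Lemma rpow_pred x q : 0 <= x -> rpow x q = rpow x (q - 1) * x.
Proof.
  intros [Hx|<-]; [|rewrite !rpow_0; ring].
  replace q with (q - 1 + 1) at 1 by ring. rewrite rpow_plus, rpow_1; lra.
Qed.

Lemma rpow_le_l x y q : 0 < q -> 0 <= x <= y -> rpow x q <= rpow y q.
Proof.
  intros Hq [[Hx|<-] Hxy]; [|rewrite rpow_0; apply rpow_ge0].
  rewrite !rpow_Rpower by lra. apply Rle_Rpower_l; lra.
Qed.

Lemma rpow_ge1 x q : 0 < q -> 1 <= x -> 1 <= rpow x q.
Proof. intros. rewrite <- (rpow_base1 q). apply rpow_le_l; lra. Qed.

Lemma rpow_le1 x q : 0 < q -> 0 <= x <= 1 -> rpow x q <= 1.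
Proof. intros. rewrite <- (rpow_base1 q). apply rpow_le_l; lra. Qed.

Lemma rpow_lt_l x y q : 0 < q -> 0 <= x < y -> rpow x q < rpow y q.
Proof.
  intros Hq [[Hx|<-] Hxy]; [|rewrite rpow_0; apply rpow_gt0; lra].
  rewrite !rpow_Rpower by lra. apply Rlt_Rpower_l; lra.
Qed.

Lemma rpow_le_l_neg x y q : q < 0 -> 0 < x <= y -> rpow y q <= rpow x q.
Proof.
  intros Hq [Hx [Hxy| ->]]; [|lra].
  rewrite !rpow_Rpower by lra. unfold Rpower.
  apply Rlt_le, exp_increasing.
  assert (ln x < ln y) by (apply ln_increasing; lra). nra.
Qed.

Lemma rpow_le_r_le1 x p q : 0 <= x <= 1 -> 0 < p <= q -> rpow x q <= rpow x p.
Proof.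
  intros [[Hx|<-] Hx1] Hpq; [|rewrite !rpow_0; lra].
  rewrite !rpow_Rpower by auto. unfold Rpower.
  assert (ln x <= 0) by (rewrite <- ln_1; apply ln_le; lra).
  destruct (Rle_lt_or_eq_dec _ _ (proj2 Hpq)) as [Hlt| ->]; [|lra].
  destruct (Rle_lt_or_eq_dec _ _ H) as [Hl| ->]; [|rewrite !Rmult_0_r; lra].
  apply Rlt_le, exp_increasing. nra.
Qed.

Lemma rpow_le_self x q : 0 <= x <= 1 -> 1 <= q -> rpow x q <= x.
Proof.
  intros Hx Hq. rewrite <- (rpow_1 x) at 2 by lra. apply rpow_le_r_le1; lra.
Qed.

Lemma rpow_ge_self x q : 0 <= x <= 1 -> 0 < q <= 1 -> x <= rpow x q.
Proof.
  intros Hx Hq. rewrite <- (rpow_1 x) at 1 by lra. apply rpow_le_r_le1; lra.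
Qed.

Lemma rpow_ge_sqr x q : 0 <= x <= 1 -> 0 < q <= 2 -> x * x <= rpow x q.
Proof. intros. rewrite <- rpow_2 by lra. apply rpow_le_r_le1; lra. Qed.

Lemma rpow_mul_two_sub x q : 0 <= x -> rpow x q * rpow x (2 - q) = x * x.
Proof.
  intros [Hx| <-]; [|rewrite rpow_0; ring].
  rewrite <- rpow_plus, <- rpow_2 by lra. f_equal; ring.
Qed.

Lemma rpow_MVT y z q : 0 < y < z ->
  exists c, y < c < z /\ rpow z q - rpow y q = q * rpow c (q - 1) * (z - y).
Proof.
  intros [Hy Hz].
  destruct (MVT_cor2 (fun x => Rpower x q) (fun x => q * Rpower x (q - 1)) y z)
    as [c [Hc Hc']]; auto.
  - intros c Hc. apply derivable_pt_lim_power. lra.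
  - exists c; split; auto. rewrite !rpow_Rpower; lra.
Qed.

Lemma rpow_subadditive y z r : 0 < r < 1 -> 0 <= y <= z ->
  rpow z r <= rpow y r + rpow (z - y) r.
Proof.
  intros Hr [Hy Hyz]. destruct (Req_dec z 0) as [->|Hz].
  { replace y with 0 by lra. rewrite Rminus_0_r, !rpow_0; lra. }
  set (v := y / z).
  assert (Hv : 0 <= v <= 1).
  { unfold v; split; [apply Rdiv_le_0_compat; lra|].
    apply Rmult_le_reg_r with z; [lra|]. field_simplify; lra. }
  replace y with (z * v) by (unfold v; field; lra).
  replace (z - z * v) with (z * (1 - v)) by ring.
  rewrite !rpow_mult_distr by lra.
  pose proof (rpow_ge_self v r ltac:(lra) ltac:(lra)).
  pose proof (rpow_ge_self (1 - v) r ltac:(lra) ltac:(lra)).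
  pose proof (rpow_ge0 z r). nra.
Qed.

Lemma rpow_sub_le_deriv_l y z r : 0 < r < 1 -> 0 < y <= z ->
  rpow z r - rpow y r <= r * rpow y (r - 1) * (z - y).
Proof.
  intros Hr [Hy [Hyz| <-]]; [|rewrite !Rminus_diag, Rmult_0_r; lra].
  destruct (rpow_MVT y z r) as [c [Hc ->]]; [lra|].
  pose proof (rpow_le_l_neg y c (r - 1) ltac:(lra) ltac:(lra)).
  apply Rmult_le_compat_r; [lra|]. apply Rmult_le_compat_l; lra.
Qed.

Lemma rpow_sub_ge_deriv_r y z r : 0 < r < 1 -> 0 <= y <= z -> 0 < z ->
  r * rpow z (r - 1) * (z - y) <= rpow z r - rpow y r.
Proof.
  intros Hr [[Hy| <-] [Hyz| <-]] Hz; try (rewrite !Rminus_diag, Rmult_0_r; lra).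
  - destruct (rpow_MVT y z r) as [c [Hc ->]]; [lra|].
    pose proof (rpow_le_l_neg c z (r - 1) ltac:(lra) ltac:(lra)).
    apply Rmult_le_compat_r; [lra|]. apply Rmult_le_compat_l; lra.
  - rewrite rpow_0, (rpow_pred z r), Rminus_0_r by lra.
    assert (0 <= rpow z (r - 1) * z) by (pose proof (rpow_ge0 z (r - 1)); nra).
    nra.
Qed.

Lemma rpow_tangent_ge v w b : 1 < b -> 0 <= v -> 0 <= w ->
  rpow v b + b * rpow v (b - 1) * (w - v) <= rpow w b.
Proof.
  intros Hb Hv Hw. rewrite (rpow_pred v b) by auto.
  pose proof (rpow_ge0 v (b - 1)).
  destruct (Rtotal_order v w) as [Hvw|[<-|Hwv]]; [| rewrite <- rpow_pred; lra |].
  - destruct (Req_dec v 0) as [->|Hv0].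
    + rewrite rpow_0. pose proof (rpow_ge0 w b). lra.
    + destruct (rpow_MVT v w b) as [c [Hc Heq]]; [lra|].
      pose proof (rpow_le_l v c (b - 1) ltac:(lra) ltac:(lra)).
      rewrite (rpow_pred v b) in Heq by lra.
      assert (b * rpow v (b - 1) * (w - v) <= b * rpow c (b - 1) * (w - v)).
      { apply Rmult_le_compat_r; [lra|]. apply Rmult_le_compat_l; lra. }
      lra.
  - destruct (Req_dec w 0) as [->|Hw0].
    + rewrite rpow_0. assert (0 <= rpow v (b - 1) * v) by nra. nra.
    + destruct (rpow_MVT w v b) as [c [Hc Heq]]; [lra|].
      pose proof (rpow_le_l c v (b - 1) ltac:(lra) ltac:(lra)).
      rewrite (rpow_pred v b) in Heq by lra.
      assert (b * rpow c (b - 1) * (v - w) <= b * rpow v (b - 1) * (v - w)).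
      { apply Rmult_le_compat_r; [lra|]. apply Rmult_le_compat_l; lra. }
      lra.
Qed.

Lemma rpow_mul_opp x q : 0 < x -> rpow x q * rpow x (- q) = 1.
Proof.
  intros Hx. rewrite <- rpow_plus, Rplus_opp_r, rpow_Rpower by auto. now apply Rpower_O.
Qed.

(** * The graph seen from a tilted support line *)

Section TiltedGraph.

Variables b t : R.
Hypothesis Hb : 1 < b < 2.
Hypothesis Ht : 0 <= t <= 1/5.

Definition tilt (x : R) : R := rpow (Rabs x) b - t * x.
Definition tilt_argmin : R := rpow (t / b) (/ (b - 1)).
Definition tilt_min : R := tilt tilt_argmin.

Local Notation x0 := tilt_argmin.
Local Notation m := tilt_min.

Lemma tilt_argmin_bounds : 0 <= x0 <= t.
Proof.
  assert (Htb : 0 <= t / b <= t).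
  { split; [apply Rdiv_le_0_compat; lra|].
    apply Rmult_le_reg_r with b; [lra|]. field_simplify; nra. }
  split; [apply rpow_ge0|].
  eapply Rle_trans; [apply rpow_le_self|]; try lra.
  rewrite <- Rinv_1. apply Rinv_le_contravar; lra.
Qed.

Lemma tilt_argmin_stationary : b * rpow x0 (b - 1) = t.
Proof.
  unfold tilt_argmin. rewrite rpow_rpow, Rinv_l, rpow_1 by (try apply Rdiv_le_0_compat; lra).
  field; lra.
Qed.

Lemma tilt_pos x : 0 <= x -> tilt x = rpow x b - t * x.
Proof. intros; unfold tilt; now rewrite Rabs_pos_eq. Qed.

Lemma tilt_min_eq : m = (1 - b) * rpow x0 b.
Proof.
  pose proof tilt_argmin_bounds. unfold tilt_min. rewrite tilt_pos by lra.
  rewrite <- tilt_argmin_stationary, (rpow_pred x0 b) by lra. ring.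
Qed.

Lemma tilt_min_nonpos : m <= 0.
Proof. rewrite tilt_min_eq. pose proof (rpow_ge0 x0 b). nra. Qed.

Lemma tilt_ge_min x : m <= tilt x.
Proof.
  pose proof tilt_argmin_bounds. pose proof tilt_argmin_stationary.
  destruct (Rle_or_lt 0 x) as [Hx|Hx].
  - unfold tilt_min. rewrite !tilt_pos by lra.
    pose proof (rpow_tangent_ge x0 x b ltac:(lra) ltac:(lra) Hx). nra.
  - unfold tilt at 1. rewrite Rabs_left by lra.
    pose proof (rpow_ge0 (- x) b). pose proof tilt_min_nonpos. nra.
Qed.

Lemma tilt_excess_right_le s : 0 <= s ->
  tilt (x0 + s) - m <= b * s * (rpow (x0 + s) (b - 1) - rpow x0 (b - 1)).
Proof.
  intros Hs. pose proof tilt_argmin_bounds. pose proof tilt_argmin_stationary.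
  unfold tilt_min. rewrite !tilt_pos by lra.
  pose proof (rpow_tangent_ge (x0 + s) x0 b ltac:(lra) ltac:(lra) ltac:(lra)). nra.
Qed.

Lemma tilt_excess_right_ge a : 0 <= a ->
  b * a * (rpow (x0 + a) (b - 1) - rpow x0 (b - 1)) <= tilt (x0 + 2 * a) - m.
Proof.
  intros Ha. pose proof tilt_argmin_bounds. pose proof tilt_argmin_stationary.
  unfold tilt_min. rewrite !tilt_pos by lra.
  pose proof (rpow_tangent_ge (x0 + a) (x0 + 2 * a) b ltac:(lra) ltac:(lra) ltac:(lra)).
  pose proof (rpow_tangent_ge x0 (x0 + a) b ltac:(lra) ltac:(lra) ltac:(lra)). nra.
Qed.

Lemma tilt_excess_left_ge a : 0 <= a -> 2 * a <= x0 ->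
  b * a * (rpow x0 (b - 1) - rpow (x0 - a) (b - 1)) <= tilt (x0 - 2 * a) - m.
Proof.
  intros Ha Hax. pose proof tilt_argmin_bounds. pose proof tilt_argmin_stationary.
  unfold tilt_min. rewrite !tilt_pos by lra.
  pose proof (rpow_tangent_ge (x0 - a) (x0 - 2 * a) b ltac:(lra) ltac:(lra) ltac:(lra)).
  pose proof (rpow_tangent_ge x0 (x0 - a) b ltac:(lra) ltac:(lra) ltac:(lra)). nra.
Qed.

(* The chord at height [mu] above the support line projects onto the sublevel
   set [{x | tilt x <= m + mu}] (near the origin); a span is an inner witness
   for its width, a bracket an outer one. *)
Definition level_span (mu L : R) : Prop :=
  exists x1 x2, -1/2 <= x1 <= x2 /\ x2 <= 1/2 /\
    tilt x1 <= m + mu /\ tilt x2 <= m + mu /\ L <= x2 - x1.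

Definition level_bracket (mu W : R) : Prop :=
  exists x1 x2, -1/2 <= x1 < x0 /\ x0 < x2 <= 1/2 /\
    m + mu < tilt x1 /\ m + mu < tilt x2 /\ x2 - x1 <= W.

Lemma level_span_le mu L L' : L' <= L -> level_span mu L -> level_span mu L'.
Proof.
  intros HL [x1 [x2 [? [? [? [? ?]]]]]]. exists x1, x2. repeat split; auto; lra.
Qed.

Lemma level_bracket_le mu W W' : W <= W' -> level_bracket mu W -> level_bracket mu W'.
Proof.
  intros HW [x1 [x2 [? [? [? [? ?]]]]]]. exists x1, x2. repeat split; auto; lra.
Qed.

Variable mu : R.
Hypothesis Hmu : 0 < mu <= 1/50.

Lemma tilt_half_gt : m + mu < tilt (1/2) /\ m + mu < tilt (-1/2).
Proof.
  pose proof tilt_min_nonpos. unfold tilt.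
  rewrite Rabs_pos_eq, Rabs_left by lra. replace (- (-1/2)) with (1/2) by field.
  pose proof (rpow_ge_sqr (1/2) b ltac:(lra) ltac:(lra)). split; nra.
Qed.

Lemma level_bracket_intro p1 p2 W : p1 < x0 < p2 ->
  m + mu < tilt p1 -> m + mu < tilt p2 -> p2 - p1 <= W -> level_bracket mu W.
Proof.
  intros Hp H1 H2 HW. pose proof tilt_argmin_bounds. pose proof tilt_half_gt.
  exists (Rmax p1 (-1/2)), (Rmin p2 (1/2)).
  unfold Rmax, Rmin.
  destruct (Rle_dec p1 (-1/2)), (Rle_dec p2 (1/2)); repeat split; lra.
Qed.

Lemma level_span_flat s : 0 <= s -> b * rpow s b <= mu -> level_span mu s.
Proof.
  intros Hs Hsb. pose proof tilt_argmin_bounds.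
  assert (Hs3 : s < 3/10).
  { apply Rnot_le_lt; intros Hs3.
    pose proof (rpow_le_l (3/10) s b ltac:(lra) ltac:(lra)).
    pose proof (rpow_ge_sqr (3/10) b ltac:(lra) ltac:(lra)). nra. }
  exists x0, (x0 + s). repeat split; try lra.
  - pose proof (tilt_ge_min x0). unfold tilt_min in *. lra.
  - pose proof (tilt_excess_right_le s Hs).
    pose proof (rpow_subadditive x0 (x0 + s) (b - 1) ltac:(lra) ltac:(lra)).
    replace (x0 + s - x0) with s in * by ring.
    assert (b * s * (rpow (x0 + s) (b - 1) - rpow x0 (b - 1)) <= b * s * rpow s (b - 1))
      by (apply Rmult_le_compat_l; nra).
    rewrite (rpow_pred s b) in Hsb by lra. lra.
Qed.

Lemma level_span_curved s : 0 < x0 -> 0 <= s ->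
  b * (s * s) <= mu * rpow x0 (2 - b) -> level_span mu s.
Proof.
  intros Hx0 Hs Hss. pose proof tilt_argmin_bounds.
  assert (HQ : rpow x0 (b - 2) * rpow x0 (2 - b) = 1).
  { replace (2 - b) with (- (b - 2)) by ring. now apply rpow_mul_opp. }
  assert (HQ' : rpow x0 (2 - b) <= 1) by (apply rpow_le1; lra).
  pose proof (rpow_ge0 x0 (b - 2)).
  exists x0, (x0 + s). repeat split; try nra.
  - pose proof (tilt_ge_min x0). unfold tilt_min in *. lra.
  - pose proof (tilt_excess_right_le s Hs).
    pose proof (rpow_sub_le_deriv_l x0 (x0 + s) (b - 1) ltac:(lra) ltac:(lra)).
    replace (x0 + s - x0) with s in * by ring. replace (b - 1 - 1) with (b - 2) in * by ring.
    assert (b * s * (rpow (x0 + s) (b - 1) - rpow x0 (b - 1))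
              <= b * s * ((b - 1) * rpow x0 (b - 2) * s)) by (apply Rmult_le_compat_l; nra).
    assert (rpow x0 (b - 2) * (b * (s * s)) <= mu) by nra.
    nra.
Qed.

Lemma level_bracket_flat a : x0 <= a -> 2 * mu <= rpow a b ->
  2 * rpow x0 (b - 1) <= rpow a (b - 1) -> level_bracket mu (4 * a).
Proof.
  intros Hxa Hab Hab1. pose proof tilt_argmin_bounds. pose proof tilt_min_nonpos.
  assert (Ha : 0 < a).
  { apply Rnot_le_lt; intros Ha. rewrite rpow_nonpos in Hab by auto. lra. }
  apply (level_bracket_intro (x0 - 2 * a) (x0 + 2 * a)); try lra.
  - unfold tilt. rewrite Rabs_left by lra.
    pose proof (rpow_le_l a (- (x0 - 2 * a)) b ltac:(lra) ltac:(lra)). nra.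
  - pose proof (tilt_excess_right_ge a ltac:(lra)).
    pose proof (rpow_le_l a (x0 + a) (b - 1) ltac:(lra) ltac:(lra)).
    assert (b * a * (rpow a (b - 1) / 2) <= b * a * (rpow (x0 + a) (b - 1) - rpow x0 (b - 1)))
      by (apply Rmult_le_compat_l; nra).
    rewrite (rpow_pred a b) in Hab by lra. nra.
Qed.

Lemma level_bracket_curved a : 0 < a -> 2 * a <= x0 ->
  4 * mu * rpow x0 (2 - b) <= b * (b - 1) * (a * a) -> level_bracket mu (4 * a).
Proof.
  intros Ha Hax Haa. pose proof tilt_argmin_bounds.
  set (Q := rpow x0 (b - 2)).
  assert (HQ : Q * rpow x0 (2 - b) = 1).
  { replace (2 - b) with (- (b - 2)) by ring. apply rpow_mul_opp; lra. }
  assert (HQa : b * (b - 1) * (a * a) * Q >= 4 * mu).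
  { assert (0 <= Q) by apply rpow_ge0. nra. }
  apply (level_bracket_intro (x0 - 2 * a) (x0 + 2 * a)); try lra.
  - pose proof (tilt_excess_left_ge a ltac:(lra) Hax).
    pose proof (rpow_sub_ge_deriv_r (x0 - a) x0 (b - 1) ltac:(lra) ltac:(lra) ltac:(lra))
      as Hderiv.
    replace (x0 - (x0 - a)) with a in * by ring. replace (b - 1 - 1) with (b - 2) in * by ring.
    fold Q in Hderiv.
    assert (b * a * ((b - 1) * Q * a) <= b * a * (rpow x0 (b - 1) - rpow (x0 - a) (b - 1)))
      by (apply Rmult_le_compat_l; nra).
    nra.
  - pose proof (tilt_excess_right_ge a ltac:(lra)).
    pose proof (rpow_sub_ge_deriv_r x0 (x0 + a) (b - 1) ltac:(lra) ltac:(lra) ltac:(lra))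
      as Hderiv.
    replace (x0 + a - x0) with a in * by ring. replace (b - 1 - 1) with (b - 2) in * by ring.
    assert (HQ2 : Q / 2 <= rpow (x0 + a) (b - 2)).
    { apply Rle_trans with (rpow (2 * x0) (b - 2)); [|apply rpow_le_l_neg; lra].
      rewrite rpow_mult_distr by lra. fold Q.
      assert (/ 2 <= rpow 2 (b - 2)).
      { rewrite <- rpow_m1, !rpow_Rpower by lra. apply Rle_Rpower; lra. }
      assert (0 <= Q) by apply rpow_ge0. unfold Rdiv. nra. }
    assert (b * a * ((b - 1) * (Q / 2) * a) <= b * a * (rpow (x0 + a) (b - 1) - rpow x0 (b - 1))).
    { apply Rmult_le_compat_l; [nra|]. eapply Rle_trans; [|exact Hderiv].
      apply Rmult_le_compat_r; [lra|]. apply Rmult_le_compat_l; lra. }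
    nra.
Qed.

(* Doubling the slope multiplies the argmin by [2 ^ (1 / (b - 1))]. *)
Lemma level_bracket_small_argmin w : 0 < w -> mu <= rpow w b ->
  x0 <= rpow 2 (/ (b - 1)) * w ->
  level_bracket mu (4 * (rpow 2 (/ (b - 1)) * rpow 2 (/ (b - 1)) + 2) * w).
Proof.
  intros Hw Hwb Hx. set (K := rpow 2 (/ (b - 1))) in *.
  assert (HK : 1 <= K) by (apply rpow_ge1; [apply Rinv_0_lt_compat|]; lra).
  assert (HKb : rpow K (b - 1) = 2).
  { unfold K. rewrite rpow_rpow, Rinv_l, rpow_1; lra. }
  pose proof tilt_argmin_bounds.
  assert (HKw : K * w <= K * K * w).
  { assert (0 <= (K - 1) * (K * w)) by (apply Rmult_le_pos; nra). lra. }
  replace (4 * (K * K + 2) * w) with (4 * ((K * K + 2) * w)) by ring.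
  apply level_bracket_flat.
  - lra.
  - apply Rle_trans with (rpow (2 * w) b); [|apply rpow_le_l; nra].
    rewrite rpow_mult_distr by lra.
    assert (2 <= rpow 2 b).
    { rewrite rpow_pred by lra. pose proof (rpow_ge1 2 (b - 1)). lra. }
    nra.
  - apply Rle_trans with (rpow (K * x0) (b - 1)); [|apply rpow_le_l; nra].
    rewrite rpow_mult_distr, HKb by lra. lra.
Qed.

End TiltedGraph.

Definition flatness (b : R) : R := (2 - b) / (2 * (b - 1)).

Lemma tilt_argmin_flatness b t : 1 < b < 2 -> 0 <= t ->
  rpow (tilt_argmin b t) (2 - b) = rpow (t / b) (flatness b) * rpow (t / b) (flatness b).
Proof.
  intros Hb Ht. unfold tilt_argmin, flatness.
  assert (Htb : 0 <= t / b) by (apply Rdiv_le_0_compat; lra).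
  destruct Htb as [Htb| <-]; [|rewrite !rpow_0; ring].
  rewrite rpow_rpow, <- rpow_plus by lra. f_equal. field. lra.
Qed.

(** * Convex bodies bounded by the graph *)

Lemma rpow_abs_le_abs b x : 1 <= b -> Rabs x <= 1 -> rpow (Rabs x) b <= Rabs x.
Proof. intros. apply rpow_le_self; auto. pose proof (Rabs_pos x); lra. Qed.

Lemma rpow_abs_lipschitz b x x' : 1 < b < 2 -> Rabs x <= 1 -> Rabs x' <= 1 ->
  rpow (Rabs x') b <= rpow (Rabs x) b + 2 * Rabs (x' - x).
Proof.
  intros Hb Hx Hx'.
  pose proof (rpow_tangent_ge (Rabs x') (Rabs x) b ltac:(lra) (Rabs_pos _) (Rabs_pos _)).
  assert (rpow (Rabs x') (b - 1) <= 1) by (apply rpow_le1; [|split; [apply Rabs_pos|]]; lra).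
  pose proof (rpow_ge0 (Rabs x') (b - 1)).
  pose proof (Rabs_triang_inv x' x). pose proof (Rabs_triang_inv x x') as Htri.
  rewrite Rabs_minus_sym in Htri. pose proof (Rabs_pos (x' - x)).
  destruct (Rle_or_lt (Rabs x') (Rabs x)).
  - assert (0 <= b * rpow (Rabs x') (b - 1) * (Rabs x - Rabs x')) by
      (apply Rmult_le_pos; nra).
    lra.
  - assert (b * rpow (Rabs x') (b - 1) * (Rabs x' - Rabs x) <= 2 * (Rabs x' - Rabs x))
      by (apply Rmult_le_compat_r; nra).
    lra.
Qed.

Lemma Rabs_le_dist2 a c : Rabs a <= sqrt (a ^ 2 + c ^ 2).
Proof. rewrite <- sqrt_Rsqr_abs. apply sqrt_le_1_alt. unfold Rsqr. nra. Qed.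

Lemma is_convex2_mem A p q tau x y : is_convex2 A -> A p -> A q -> 0 <= tau <= 1 ->
  x = (1 - tau) * fst p + tau * fst q -> y = (1 - tau) * snd p + tau * snd q -> A (x, y).
Proof. intros HC Hp Hq Ht -> ->. now apply HC. Qed.

Lemma Glb_Rbar_min (E : R -> Prop) a : (forall x, E x -> a <= x) -> E a ->
  real (Glb_Rbar E) = a.
Proof.
  intros Hlow Ha. destruct (Glb_Rbar_correct E) as [Hl Hg].
  assert (Rbar_le a (Glb_Rbar E)) by (apply Hg; intros x Hx; simpl; auto).
  specialize (Hl a Ha). destruct (Glb_Rbar E); simpl in *; try contradiction; lra.
Qed.

Lemma Lub_Rbar_between (E : R -> Prop) L U : (exists x, E x /\ L <= x) ->
  (forall x, E x -> x <= U) -> L <= real (Lub_Rbar E) <= U.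
Proof.
  intros [x [Hx HL]] HU. destruct (Lub_Rbar_correct E) as [Hu Hl].
  assert (Rbar_le (Lub_Rbar E) U) by (apply Hl; intros y Hy; simpl; auto).
  specialize (Hu x Hx). destruct (Lub_Rbar E); simpl in *; try contradiction; lra.
Qed.

Lemma sign_abs sg x : sg * sg = 1 -> Rabs (sg * x) = Rabs x.
Proof.
  intros Hsg. rewrite Rabs_mult.
  replace (Rabs sg) with 1; [ring|].
  rewrite <- sqrt_Rsqr_abs. unfold Rsqr. now rewrite Hsg, sqrt_1.
Qed.

Section GraphBody.

Variables (b : R) (A : pt -> Prop).
Hypothesis Hb : 1 < b < 2.
Hypothesis HA : convex_body A.
Hypothesis HG : boundary_is_graph b A.

Let HC : is_convex2 A := proj1 (proj2 (proj2 HA)).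

Lemma graph_boundary x : Rabs x <= 1 -> boundary2 A (x, rpow (Rabs x) b).
Proof.
  intros Hx. pose proof (rpow_abs_le_abs b x ltac:(lra) Hx). pose proof (rpow_ge0 (Rabs x) b).
  apply HG; [apply Rabs_le_between; auto|lra|symmetry; apply abspow_rpow].
Qed.

Lemma graph_mem x : Rabs x <= 1 -> A (x, rpow (Rabs x) b).
Proof.
  intros Hx. apply (proj1 HA). intros eps Heps.
  apply (graph_boundary x Hx eps Heps).
Qed.

Lemma epigraph_mem x y : Rabs x <= 1 -> rpow (Rabs x) b <= y <= 1 -> A (x, y).
Proof.
  intros Hx Hy. apply Rabs_le_between in Hx as Hx'.
  assert (Hcorner : forall s, s * s = 1 -> A (s, 1)).
  { intros s Hs.
    assert (Habs : Rabs s = 1) by (rewrite <- (Rmult_1_r s), sign_abs, Rabs_R1; auto).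
    pose proof (graph_mem s ltac:(lra)) as Hg. now rewrite Habs, rpow_base1 in Hg. }
  assert (Htop : A (x, 1)).
  { apply (is_convex2_mem A (-1, 1) (1, 1) ((x + 1) / 2)); auto; simpl;
      [apply Hcorner; ring|apply Hcorner; ring|split; lra|field|ring]. }
  pose proof (rpow_abs_le_abs b x ltac:(lra) Hx).
  destruct (Req_dec y 1) as [->|Hy1]; auto.
  apply (is_convex2_mem A _ _ ((y - rpow (Rabs x) b) / (1 - rpow (Rabs x) b)) x y HC
           (graph_mem x Hx) Htop); simpl.
  - split; [apply Rdiv_le_0_compat; lra|].
    apply Rmult_le_reg_r with (1 - rpow (Rabs x) b); [lra|]. field_simplify; lra.
  - ring.
  - field. lra.
Qed.

(* A point [q] outside [A] close to the boundary point [(x, f x)] would be the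
   midpoint of two points of [A]: one on the vertical segment below [(x, f x)],
   one in the epigraph above it. *)
Lemma mem_above_graph x y : Rabs x <= 1/2 -> A (x, y) -> rpow (Rabs x) b <= y.
Proof.
  intros Hx Hxy. apply Rnot_lt_le; intros Hy. apply Rabs_le_between in Hx as Hx'.
  set (fx := rpow (Rabs x) b) in *.
  set (g := Rmin (fx - y) (1/8)).
  assert (Hg : 0 < g <= fx - y /\ g <= 1/8)
    by (unfold g; repeat split; [apply Rmin_glb_lt; lra|apply Rmin_l|apply Rmin_r]).
  assert (Hlow : A (x, fx - g)).
  { apply (is_convex2_mem A _ _ (1 - g / (fx - y)) x (fx - g) HC Hxy (graph_mem x ltac:(lra)));
      simpl; [|ring|fold fx; field; lra].
    assert (0 <= g / (fx - y) <= 1); [|lra].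
    split; [apply Rdiv_le_0_compat; lra|].
    apply Rmult_le_reg_r with (fx - y); [lra|]. field_simplify; lra. }
  destruct (graph_boundary x ltac:(lra) (g / 8) ltac:(lra)) as [_ [[qx qy] [Hq Hd]]].
  unfold dist2 in Hd; cbn [fst snd] in Hd; fold fx in Hd.
  pose proof (Rabs_le_dist2 (x - qx) (fx - qy)).
  pose proof (Rabs_le_dist2 (fx - qy) (x - qx)) as Hdist. rewrite Rplus_comm in Hdist.
  assert (Hdx : Rabs (x - qx) < g / 8) by lra. assert (Hdy : Rabs (fx - qy) < g / 8) by lra.
  apply Rabs_def2 in Hdx. apply Rabs_def2 in Hdy.
  assert (Hhigh : A (2 * qx - x, 2 * qy - fx + g)).
  { apply epigraph_mem; [apply Rabs_le; lra|].
    pose proof (rpow_abs_lipschitz b x (2 * qx - x) Hb ltac:(apply Rabs_le; lra)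
                  ltac:(apply Rabs_le; lra)) as Hlip.
    pose proof (rpow_abs_le_abs b x ltac:(lra) ltac:(apply Rabs_le; lra)) as Hfx.
    assert (Rabs (2 * qx - x - x) <= g / 4) by (apply Rabs_le; lra).
    fold fx in Hlip, Hfx. split; lra. }
  apply Hq, (is_convex2_mem A _ _ (1/2) qx qy HC Hlow Hhigh); simpl; lra.
Qed.


Variables sg t : R.
Hypothesis Hsg : sg * sg = 1.
Hypothesis Ht : 0 <= t <= 1/5.

Local Notation x0 := (tilt_argmin b t).
Local Notation m := (tilt_min b t).

(* [sg = 1] or [-1] is the sign of the angle; chords are level sets of this height. *)
Definition tilted_height (q : pt) : R := snd q - sg * t * fst q.

Lemma tilted_height_sign x y : tilted_height (sg * x, y) = y - t * x.
Proof.
  unfold tilted_height; simpl.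
  replace (sg * t * (sg * x)) with (sg * sg * t * x) by ring. rewrite Hsg; ring.
Qed.

Lemma touching_point_mem : A (sg * x0, rpow x0 b).
Proof.
  pose proof (tilt_argmin_bounds b t Hb Ht).
  pose proof (graph_mem (sg * x0)) as Hg. rewrite sign_abs, Rabs_pos_eq in Hg by (auto; lra).
  apply Hg; lra.
Qed.

Lemma tilted_height_touching_point : tilted_height (sg * x0, rpow x0 b) = m.
Proof.
  pose proof (tilt_argmin_bounds b t Hb Ht).
  rewrite tilted_height_sign. unfold tilt_min. rewrite tilt_pos; lra.
Qed.

Lemma tilt_le_tilted_height x y : Rabs x <= 1/2 -> A (sg * x, y) ->
  tilt b t x <= tilted_height (sg * x, y).
Proof.
  intros Hx Hxy. rewrite tilted_height_sign. unfold tilt.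
  pose proof (mem_above_graph (sg * x) y) as Hy. rewrite sign_abs in Hy by auto. 
  specialize (Hy Hx Hxy). lra.
Qed.

(* Were [q] below the support line, so would be the points of the segment from
   the touching point towards [q], some of them within [|x| <= 1/2]. *)
Lemma tilted_height_ge_min q : A q -> m <= tilted_height q.
Proof.
  intros Hq. apply Rnot_lt_le; intros Hlt.
  pose proof (tilt_argmin_bounds b t Hb Ht).
  destruct q as [qx qy].
  set (X := sg * qx).
  assert (HqX : qx = sg * X) by (unfold X; rewrite <- Rmult_assoc, Hsg; ring).
  rewrite HqX in Hq, Hlt. rewrite tilted_height_sign in Hlt.
  set (d := Rabs (X - x0) + 1).
  assert (Hd : 1 <= d) by (unfold d; pose proof (Rabs_pos (X - x0)); lra).
  set (rho := / (4 * d)).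
  assert (Hrho0 : 0 < rho) by (apply Rinv_0_lt_compat; lra).
  assert (Hrhod : rho * d = 1/4) by (unfold rho; field; lra).
  assert (Hrd : rho * Rabs (X - x0) <= 1/4) by (unfold d in Hrhod; nra).
  set (z := (1 - rho) * x0 + rho * X).
  assert (Hz : Rabs z <= 1/2).
  { assert (Hzx : Rabs (z - x0) <= 1/4)
      by (replace (z - x0) with (rho * (X - x0)) by (unfold z; ring);
          rewrite Rabs_mult, (Rabs_pos_eq rho); lra).
    apply Rabs_le_between in Hzx. apply Rabs_le. lra. }
  set (zy := (1 - rho) * rpow x0 b + rho * qy).
  assert (HZ : A (sg * z, zy)).
  { apply (is_convex2_mem A _ _ rho _ _ HC touching_point_mem Hq); [nra| |reflexivity].
    simpl; unfold z; ring. }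
  pose proof (tilt_le_tilted_height z zy Hz HZ) as Hzy.
  pose proof (tilt_ge_min b t Hb Ht z).
  pose proof tilted_height_touching_point as Hm.
  rewrite tilted_height_sign in Hzy, Hm.
  assert (zy - t * z = (1 - rho) * m + rho * (qy - t * X)) by (unfold zy, z; rewrite <- Hm; ring).
  assert (rho * (qy - t * X) < rho * m) by (apply Rmult_lt_compat_l; lra).
  lra.
Qed.

Lemma level_point_mem mu x : 0 < mu <= 1/50 -> Rabs x <= 1/2 ->
  tilt b t x <= m + mu -> A (sg * x, m + mu + t * x).
Proof.
  intros Hmu Hx Hle. pose proof (tilt_min_nonpos b t Hb Ht).
  apply epigraph_mem; rewrite sign_abs by auto; [lra|].
  apply Rabs_le_between in Hx. unfold tilt in Hle. split; nra.
Qed.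

Lemma level_point_in_bracket mu x1 x2 X y : 0 < mu <= 1/50 ->
  -1/2 <= x1 < x0 -> x0 < x2 <= 1/2 -> m + mu < tilt b t x1 -> m + mu < tilt b t x2 ->
  A (sg * X, y) -> y - t * X = m + mu -> x1 < X < x2.
Proof.
  intros Hmu Hx1 Hx2 Hh1 Hh2 Hp Hy. pose proof (tilt_argmin_bounds b t Hb Ht).
  assert (Hsub : forall c rho, -1/2 <= c <= 1/2 -> m + mu < tilt b t c -> 0 <= rho <= 1 ->
                   c = (1 - rho) * x0 + rho * X -> False).
  { intros c rho Hc Hhc Hrho ->.
    assert (HZ : A (sg * ((1 - rho) * x0 + rho * X), m + mu + t * ((1 - rho) * x0 + rho * X))).
    { assert (Hx0 : tilt b t x0 <= m + mu) by (unfold tilt_min; lra).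
      apply (is_convex2_mem A _ _ rho _ _ HC
               (level_point_mem mu x0 Hmu ltac:(apply Rabs_le; lra) Hx0) Hp Hrho);
        simpl; [ring|replace y with (m + mu + t * X) by lra; ring]. }
    pose proof (tilt_le_tilted_height ((1 - rho) * x0 + rho * X) _
                  ltac:(apply Rabs_le; lra) HZ) as Hle.
    rewrite tilted_height_sign in Hle. lra. }
  split; apply Rnot_le_lt; intros HX.
  - apply (Hsub x1 ((x0 - x1) / (x0 - X))); try lra; [|field; lra].
    split; [apply Rdiv_le_0_compat; lra|].
    apply Rmult_le_reg_r with (x0 - X); [lra|]. field_simplify; lra.
  - apply (Hsub x2 ((x2 - x0) / (X - x0))); try lra; [|field; lra].
    split; [apply Rdiv_le_0_compat; lra|].
    apply Rmult_le_reg_r with (X - x0); [lra|]. field_simplify; lra.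
Qed.

Lemma dist2_level_points c X X' :
  dist2 (sg * X, c + t * X) (sg * X', c + t * X') = Rabs (X - X') * sqrt (1 + t ^ 2).
Proof.
  unfold dist2; cbn [fst snd].
  replace ((sg * X - sg * X') ^ 2 + (c + t * X - (c + t * X')) ^ 2)
    with ((X - X')² * (1 + t ^ 2)) by (unfold Rsqr; rewrite <- Hsg; ring).
  rewrite sqrt_mult, sqrt_Rsqr_abs by (try apply Rle_0_sqr; nra). reflexivity.
Qed.

Lemma dist2_level_points_bounds c X X' :
  Rabs (X - X') <= dist2 (sg * X, c + t * X) (sg * X', c + t * X') <= 2 * Rabs (X - X').
Proof.
  rewrite dist2_level_points. pose proof (Rabs_pos (X - X')).
  assert (1 <= sqrt (1 + t ^ 2) <= 2).
  { rewrite <- sqrt_1 at 1. rewrite <- (sqrt_Rsqr 2) by lra.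
    split; apply sqrt_le_1_alt; unfold Rsqr; nra. }
  split; nra.
Qed.

Variables th co : R.
Hypothesis Hco : 0 < co.
Hypothesis Hdot : forall q, dot q (u th) = co * tilted_height q.

Lemma support_min_tilted : support_min A th = co * m.
Proof.
  apply Glb_Rbar_min.
  - intros r [q [Hq ->]]. rewrite Hdot.
    apply Rmult_le_compat_l; [lra|]. now apply tilted_height_ge_min.
  - exists (sg * x0, rpow x0 b). split; [apply touching_point_mem|].
    now rewrite Hdot, tilted_height_touching_point.
Qed.

Lemma chord_tilted lam p : chord A th lam p <-> A p /\ tilted_height p = m + lam / co.
Proof.
  unfold chord. rewrite support_min_tilted, Hdot.
  split; intros [Hp Hh]; split; auto.
  - apply Rmult_eq_reg_l with co; [rewrite Hh; field|]; lra.
  - rewrite Hh. field. lra.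
Qed.

Lemma chord_length_between lam L W : 0 < lam -> lam / co <= 1/50 ->
  level_span b t (lam / co) L -> level_bracket b t (lam / co) W ->
  L <= chord_length A th lam <= 2 * W.
Proof.
  intros Hlam Hmu [x1 [x2 [Hx12 [Hx2 [Hh1 [Hh2 HL]]]]]] [y1 [y2 [Hy1 [Hy2 [Hk1 [Hk2 HW]]]]]].
  set (mu := lam / co) in *.
  assert (Hmu0 : 0 < mu <= 1/50) by (split; [apply Rdiv_lt_0_compat|]; lra).
  assert (Hlevel : forall X, chord A th lam (sg * X, m + mu + t * X) <-> A (sg * X, m + mu + t * X)).
  { intros X. rewrite chord_tilted, tilted_height_sign. fold mu. split; [tauto|]. split; auto; lra. }
  assert (Hpar : forall p, chord A th lam p -> exists X, p = (sg * X, m + mu + t * X) /\ y1 < X < y2).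
  { intros [px py] Hp. apply chord_tilted in Hp as [Hp Hh].
    set (X := sg * px). assert (Hpx : px = sg * X) by (unfold X; rewrite <- Rmult_assoc, Hsg; ring).
    exists X. rewrite Hpx in Hp, Hh |- *. rewrite tilted_height_sign in Hh. fold mu in Hh.
    split; [f_equal; lra|].
    apply (level_point_in_bracket mu y1 y2 _ py); auto; lra. }
  unfold chord_length. apply Lub_Rbar_between.
  - exists (dist2 (sg * x2, m + mu + t * x2) (sg * x1, m + mu + t * x1)). split.
    + exists (sg * x2, m + mu + t * x2), (sg * x1, m + mu + t * x1).
      rewrite !Hlevel. split; [|split]; auto; apply level_point_mem; auto; apply Rabs_le; lra.
    + pose proof (dist2_level_points_bounds (m + mu) x2 x1). rewrite Rabs_pos_eq in H; lra.
  - intros r [p [q [Hp [Hq ->]]]].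
    destruct (Hpar p Hp) as [X [-> HX]]. destruct (Hpar q Hq) as [X' [-> HX']].
    pose proof (dist2_level_points_bounds (m + mu) X X').
    assert (Rabs (X - X') <= W) by (apply Rabs_le; lra). lra.
Qed.

End GraphBody.

(** * Chord lengths *)

Lemma sin_cos_small a : 0 <= a <= 1/10 -> a / 2 <= sin a <= a /\ 99/100 <= cos a <= 1.
Proof.
  intros Ha. assert (3 < PI) by (pose proof PI2_3_2; lra).
  pose proof (sin_bound a 0 ltac:(lra) ltac:(lra)) as [H1 H2].
  pose proof (cos_bound a 0 ltac:(lra) ltac:(lra)) as [H3 H4].
  unfold sin_approx, cos_approx, sin_term, cos_term in *. simpl in *.
  repeat split; nra.
Qed.

(* [u (th + PI/2) = (- sin th, cos th)], so the level lines have slope [tan th]. *)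
Lemma dot_rotated_tilted th : Rabs th <= 1/10 ->
  exists sg T co, sg * sg = 1 /\ 99/100 <= co <= 1 /\ Rabs th / 2 <= T <= 2 * Rabs th /\
    forall q, dot q (u (th + PI/2)) = co * tilted_height sg T q.
Proof.
  intros Hth.
  assert (Hd : forall q, dot q (u (th + PI/2)) = - sin th * fst q + cos th * snd q).
  { intros q. unfold dot, u; simpl. rewrite cos_plus, sin_plus, cos_PI2, sin_PI2. ring. }
  destruct (Rle_or_lt 0 th) as [H|H].
  - rewrite Rabs_pos_eq in * by lra. destruct (sin_cos_small th ltac:(lra)) as [Hs Hc].
    exists 1, (sin th / cos th), (cos th).
    assert (sin th / cos th * cos th = sin th) by (field; lra).
    repeat split; try lra; try (apply Rmult_le_reg_r with (cos th); nra).
    intros q. rewrite Hd. unfold tilted_height. field. lra.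
  - rewrite Rabs_left in * by lra. destruct (sin_cos_small (- th) ltac:(lra)) as [Hs Hc].
    rewrite sin_neg, cos_neg in *.
    exists (-1), (- sin th / cos th), (cos th).
    assert (- sin th / cos th * cos th = - sin th) by (field; lra).
    repeat split; try lra; try (apply Rmult_le_reg_r with (cos th); nra).
    intros q. rewrite Hd. unfold tilted_height. field. lra.
Qed.

Lemma sqrt_le_of_le_sqr x c : 0 <= c -> x <= c * c -> sqrt x <= c.
Proof. intros. rewrite <- (sqrt_Rsqr c) by auto. apply sqrt_le_1_alt. unfold Rsqr; lra. Qed.

Lemma le_sqrt_of_sqr_le x c : 0 <= c -> c * c <= x -> c <= sqrt x.
Proof. intros. rewrite <- (sqrt_Rsqr c) by auto. apply sqrt_le_1_alt. unfold Rsqr; lra. Qed.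

Section Scaling.

Variable b : R.
Hypothesis Hb : 1 < b < 2.

Lemma chord_length_reduction A th lam : convex_body A -> boundary_is_graph b A ->
  0 < lam <= 1/100 -> Rabs th <= 1/10 ->
  exists T mu, Rabs th / 2 <= T <= 2 * Rabs th /\ lam <= mu <= 2 * lam /\
    forall L W, level_span b T mu L -> level_bracket b T mu W ->
      L <= chord_length A (th + PI/2) lam <= 2 * W.
Proof.
  intros HA HG Hlam Hth.
  destruct (dot_rotated_tilted th Hth) as [sg [T [co [Hsg [Hco [HT Hdot]]]]]].
  assert (Hmu : lam <= lam / co <= 2 * lam).
  { split; apply Rmult_le_reg_r with co; try lra; field_simplify; nra. }
  exists T, (lam / co). split; [lra|split; [lra|]].
  intros L W. pose proof (Rabs_pos th).
  apply (chord_length_between b A Hb HA HG sg T Hsg); auto; lra.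
Qed.

Lemma lt_sqr_of_rpow_lt lam c : 0 < lam -> 0 <= c <= 1 -> rpow lam ((b - 1) / b) < c ->
  lam < c * c.
Proof.
  intros Hlam Hc Hk.
  assert (Hinv : rpow (rpow lam ((b - 1) / b)) (b / (b - 1)) = lam).
  { rewrite rpow_rpow, <- rpow_1 by lra. f_equal. field. lra. }
  assert (rpow (rpow lam ((b - 1) / b)) (b / (b - 1)) < rpow c (b / (b - 1))).
  { apply rpow_lt_l; [apply Rdiv_lt_0_compat; lra|]. split; [apply rpow_ge0|auto]. }
  assert (rpow c (b / (b - 1)) <= rpow c 2).
  { apply rpow_le_r_le1; [lra|]. split; [lra|].
    apply Rmult_le_reg_r with (b - 1); [lra|]. field_simplify; lra. }
  rewrite rpow_2 in * by lra. lra.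
Qed.

Lemma rpow_rpow_inv_pred lam : 0 < lam ->
  rpow (rpow lam ((b - 1) / b)) (/ (b - 1)) = rpow lam (/ b).
Proof. intros. rewrite rpow_rpow by lra. f_equal. field. lra. Qed.

Lemma rpow_inv_double x : 0 <= x -> rpow (2 * x) (/ b) <= 2 * rpow x (/ b).
Proof.
  intros Hx. rewrite rpow_mult_distr by lra. apply Rmult_le_compat_r; [apply rpow_ge0|].
  rewrite <- (rpow_1 2) at 2 by lra. rewrite !rpow_Rpower by lra. apply Rle_Rpower; [lra|].
  rewrite <- Rinv_1. apply Rinv_le_contravar; lra.
Qed.

Lemma small_angle_span T mu lam : 0 <= T <= 1/5 -> 0 < lam <= mu -> mu <= 1/50 ->
  level_span b T mu (rpow lam (/ b) / 2).
Proof.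
  intros HT Hlam Hmu.
  set (s := rpow (mu / b) (/ b)).
  assert (Hmub : 0 < mu / b) by (apply Rdiv_lt_0_compat; lra).
  apply level_span_le with s.
  - apply Rle_trans with (rpow (lam / 2) (/ b)).
    + unfold Rdiv. rewrite rpow_mult_distr by lra.
      apply Rmult_le_compat_l; [apply rpow_ge0|].
      apply rpow_ge_self; [lra|]. split; [apply Rinv_0_lt_compat|rewrite <- Rinv_1; apply Rinv_le_contravar]; lra.
    + apply rpow_le_l; [apply Rinv_0_lt_compat; lra|]. split; [lra|].
      apply Rmult_le_reg_r with (2 * b); [lra|]. field_simplify; nra.
  - apply level_span_flat; try lra; [apply rpow_ge0|].
    unfold s. rewrite rpow_rpow, Rinv_l, rpow_1 by lra. right; field; lra.
Qed.

Lemma small_angle_bracket T mu lam : 0 <= T <= 1/5 -> 0 < mu <= 1/50 -> 0 < lam <= mu ->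
  T <= 2 * rpow lam ((b - 1) / b) ->
  level_bracket b T mu
    (4 * (rpow 2 (/ (b - 1)) * rpow 2 (/ (b - 1)) + 2) * rpow mu (/ b)).
Proof.
  intros HT Hmu Hlam HTk.
  assert (Hib : 0 < / (b - 1)) by (apply Rinv_0_lt_compat; lra).
  apply level_bracket_small_argmin; auto; [apply rpow_gt0; lra| |].
  - rewrite rpow_rpow, Rinv_l, rpow_1; lra.
  - unfold tilt_argmin. apply Rle_trans with (rpow (2 * rpow lam ((b - 1) / b)) (/ (b - 1))).
    + apply rpow_le_l; auto. split; [apply Rdiv_le_0_compat; lra|].
      apply Rle_trans with T; [|auto]. apply Rmult_le_reg_r with b; [lra|]. field_simplify; nra.
    + rewrite rpow_mult_distr, rpow_rpow_inv_pred by (try apply rpow_ge0; lra).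
      apply Rmult_le_compat_l; [apply rpow_ge0|].
      apply rpow_le_l; [apply Rinv_0_lt_compat|]; lra.
Qed.

Lemma chord_length_small_angle : exists c1 c2, 0 < c1 /\ 0 < c2 /\
  forall A th lam, convex_body A -> boundary_is_graph b A -> 0 < lam ->
    Rabs th < rpow lam ((b - 1) / b) -> rpow lam ((b - 1) / b) < 1/10 ->
    c1 * rpow lam (/ b) <= chord_length A (th + PI/2) lam <= c2 * rpow lam (/ b).
Proof.
  set (K := rpow 2 (/ (b - 1))).
  assert (HK : 0 <= K) by apply rpow_ge0.
  exists (/ 2), (16 * (K * K + 2)). split; [lra|split; [nra|]].
  intros A th lam HA HG Hlam Hth Hk.
  pose proof (lt_sqr_of_rpow_lt lam (1/10) Hlam ltac:(lra) Hk).
  destruct (chord_length_reduction A th lam HA HG ltac:(lra) ltac:(lra))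
    as [T [mu [HT [Hmu Hchord]]]].
  pose proof (Rabs_pos th).
  destruct (Hchord _ _ (small_angle_span T mu lam ltac:(lra) ltac:(lra) ltac:(lra))
              (small_angle_bracket T mu lam ltac:(lra) ltac:(lra) ltac:(lra) ltac:(lra)))
    as [Hlo Hhi].
  assert (rpow mu (/ b) <= 2 * rpow lam (/ b)).
  { eapply Rle_trans; [|apply rpow_inv_double; lra]. apply rpow_le_l; [apply Rinv_0_lt_compat|]; lra. }
  fold K in Hhi. split; [lra|]. nra.
Qed.

Lemma rpow_inv_le_flatness lam a : 0 < lam -> rpow lam ((b - 1) / b) <= a ->
  rpow lam (/ b) <= sqrt lam * rpow a (flatness b).
Proof.
  intros Hlam Ha.
  replace (/ b) with (/ 2 + (b - 1) / b * flatness b) by (unfold flatness; field; lra).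
  rewrite rpow_plus, (rpow_Rpower lam (/ 2)), Rpower_sqrt, <- rpow_rpow by lra.
  apply Rmult_le_compat_l; [apply sqrt_pos|].
  apply rpow_le_l; [unfold flatness; apply Rdiv_lt_0_compat; lra|].
  split; [apply rpow_ge0|auto].
Qed.

Lemma rpow_slope_flatness_bounds T a : 0 < a -> a / 2 <= T <= 2 * a ->
  rpow (1/4) (flatness b) * rpow a (flatness b) <= rpow (T / b) (flatness b)
    <= rpow 2 (flatness b) * rpow a (flatness b).
Proof.
  intros Ha HT. assert (He : 0 < flatness b) by (apply Rdiv_lt_0_compat; lra).
  rewrite <- !rpow_mult_distr by lra. split; apply rpow_le_l; auto; split;
    try (apply Rmult_le_reg_r with b; [lra|]; field_simplify); nra.
Qed.

Lemma large_angle_span T mu lam a : 0 < a -> a / 2 <= T <= 2 * a -> T <= 1/5 ->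
  0 < lam <= mu -> mu <= 1/50 ->
  level_span b T mu (rpow (1/4) (flatness b) / 2 * (sqrt lam * rpow a (flatness b))).
Proof.
  intros Ha HT HT5 Hlam Hmu.
  pose proof (rpow_slope_flatness_bounds T a Ha HT) as [Hlo _].
  set (P := rpow a (flatness b)) in *. set (F := rpow (T / b) (flatness b)) in *.
  set (C := rpow (1/4) (flatness b)) in *.
  assert (0 <= C * P) by (apply Rmult_le_pos; apply rpow_ge0).
  assert (Hsl : sqrt lam * sqrt lam = lam) by (apply sqrt_sqrt; lra).
  apply level_span_le with (sqrt (mu * (F * F) / b)).
  - apply le_sqrt_of_sqr_le; [pose proof (sqrt_pos lam); nra|].
    replace (C / 2 * (sqrt lam * P) * (C / 2 * (sqrt lam * P)))
      with (sqrt lam * sqrt lam * ((C * P) * (C * P)) / 4) by field.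
    rewrite Hsl.
    assert (C * P * (C * P) <= F * F) by nra.
    apply Rle_trans with (lam * (F * F) / 4).
    + apply Rmult_le_compat_r; [lra|]. apply Rmult_le_compat_l; lra.
    + apply Rmult_le_reg_r with (4 * b); [lra|]. field_simplify; [|lra].
      assert (0 <= (4 * mu - lam * b) * F ^ 2) by (apply Rmult_le_pos; nra). lra.
  - apply level_span_curved; try lra.
    + apply rpow_gt0, Rdiv_lt_0_compat; lra.
    + apply sqrt_pos.
    + rewrite sqrt_sqrt, tilt_argmin_flatness by (try apply Rdiv_le_0_compat; nra).
      right. fold F. field. lra.
Qed.

Lemma large_angle_bracket_curved T mu lam a : 0 < a -> a / 2 <= T <= 2 * a -> T <= 1/5 ->
  0 < mu <= 1/50 -> mu <= 2 * lam ->
  16 * mu / (b * (b - 1)) <= rpow (tilt_argmin b T) b ->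
  level_bracket b T mu
    (4 * (sqrt (8 / (b * (b - 1))) * rpow 2 (flatness b)) * (sqrt lam * rpow a (flatness b))).
Proof.
  intros Ha HT HT5 Hmu Hlam Hbig.
  pose proof (rpow_slope_flatness_bounds T a Ha HT) as [_ Hhi].
  pose proof (rpow_mul_two_sub (tilt_argmin b T) b (rpow_ge0 _ _)) as Hsqr.
  pose proof (tilt_argmin_flatness b T Hb ltac:(lra)) as HQ.
  rewrite HQ in Hsqr.
  set (x0 := tilt_argmin b T) in *. set (F := rpow (T / b) (flatness b)) in *.
  set (P := rpow a (flatness b)) in *. set (D := rpow 2 (flatness b)) in *.
  assert (Hbb : 0 < b * (b - 1)) by nra.
  assert (HF : 0 < F) by (apply rpow_gt0, Rdiv_lt_0_compat; lra).
  assert (Hx0 : 0 <= x0) by apply rpow_ge0.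
  assert (Hpos : 0 < 4 * mu * (F * F) / (b * (b - 1)))
    by (apply Rdiv_lt_0_compat; [apply Rmult_lt_0_compat; nra|lra]).
  set (ac := sqrt (4 * mu * (F * F) / (b * (b - 1)))).
  assert (Hac : ac * ac = 4 * mu * (F * F) / (b * (b - 1))) by (apply sqrt_sqrt; lra).
  apply level_bracket_le with (4 * ac).
  - rewrite Rmult_assoc. apply Rmult_le_compat_l; [lra|]. apply sqrt_le_of_le_sqr.
    + pose proof (sqrt_pos (8 / (b * (b - 1)))). pose proof (sqrt_pos lam).
      pose proof (rpow_ge0 2 (flatness b)). pose proof (rpow_ge0 a (flatness b)).
      apply Rmult_le_pos; apply Rmult_le_pos; auto.
    + replace (sqrt (8 / (b * (b - 1))) * D * (sqrt lam * P) * (sqrt (8 / (b * (b - 1))) * D * (sqrt lam * P)))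
        with (sqrt (8 / (b * (b - 1))) * sqrt (8 / (b * (b - 1))) * (sqrt lam * sqrt lam) * ((D * P) * (D * P)))
        by ring.
      rewrite !sqrt_sqrt by (try apply Rlt_le, Rdiv_lt_0_compat; nra).
      assert (F * F <= D * P * (D * P)) by nra.
      apply Rmult_le_reg_r with (b * (b - 1)); [lra|].
      replace (4 * mu * (F * F) / (b * (b - 1)) * (b * (b - 1))) with (4 * mu * (F * F))
        by (field; lra).
      replace (8 / (b * (b - 1)) * lam * (D * P * (D * P)) * (b * (b - 1)))
        with (8 * lam * (D * P * (D * P))) by (field; lra).
      assert (4 * mu * (F * F) <= 8 * lam * (F * F)) by nra. nra.
  - apply level_bracket_curved; fold x0; try lra.
    + now apply sqrt_lt_R0.
    + assert (Hsq : 2 * ac * (2 * ac) <= x0 * x0).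
      { rewrite <- Hsqr. replace (2 * ac * (2 * ac)) with (4 * (ac * ac)) by ring. rewrite Hac.
        apply Rle_trans with (16 * mu / (b * (b - 1)) * (F * F)); [right; field; lra|].
        apply Rmult_le_compat_r; nra. }
      assert (0 <= ac) by apply sqrt_pos. nra.
    + rewrite HQ, Hac. right. field. lra.
Qed.

Lemma large_angle_bracket_flat T mu lam a : 0 <= T <= 1/5 -> 0 < mu <= 1/50 ->
  0 < lam -> mu <= 2 * lam -> rpow lam ((b - 1) / b) <= a ->
  rpow (tilt_argmin b T) b <= 16 * mu / (b * (b - 1)) ->
  level_bracket b T mu
    (8 * (rpow 2 (/ (b - 1)) * rpow 2 (/ (b - 1)) + 2) * rpow (16 / (b * (b - 1))) (/ b)
       * (sqrt lam * rpow a (flatness b))).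
Proof.
  intros HT Hmu Hlam Hmulam Ha Hsmall.
  set (K := rpow 2 (/ (b - 1))). set (K' := rpow (16 / (b * (b - 1))) (/ b)).
  assert (Hbb : 0 < b * (b - 1) < 2) by nra.
  assert (H16 : 1 <= 16 / (b * (b - 1)))
    by (apply Rmult_le_reg_r with (b * (b - 1)); [lra|]; field_simplify; lra).
  assert (HK : 1 <= K) by (apply rpow_ge1; [apply Rinv_0_lt_compat|]; lra).
  assert (HK' : 1 <= K') by (apply rpow_ge1; [apply Rinv_0_lt_compat|]; lra).
  assert (Hib : 0 < / b) by (apply Rinv_0_lt_compat; lra).
  pose proof (rpow_gt0 mu (/ b) ltac:(lra)) as Hw.
  pose proof (rpow_ge0 (tilt_argmin b T) b).
  assert (Hwb : rpow (K' * rpow mu (/ b)) b = 16 / (b * (b - 1)) * mu).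
  { unfold K'. rewrite <- rpow_mult_distr, rpow_rpow, Rinv_l, rpow_1 by (try apply Rmult_le_pos; lra).
    reflexivity. }
  apply level_bracket_le with (4 * (K * K + 2) * (K' * rpow mu (/ b))).
  - assert (rpow mu (/ b) <= 2 * (sqrt lam * rpow a (flatness b))).
    { apply Rle_trans with (2 * rpow lam (/ b)); [|pose proof (rpow_inv_le_flatness lam a Hlam Ha); lra].
      eapply Rle_trans; [|apply rpow_inv_double; lra]. apply rpow_le_l; lra. }
    assert (0 <= K * K + 2) by nra. fold K. fold K'.
    replace (8 * (K * K + 2) * K' * (sqrt lam * rpow a (flatness b)))
      with (4 * (K * K + 2) * (K' * (2 * (sqrt lam * rpow a (flatness b))))) by ring.
    apply Rmult_le_compat_l; [lra|]. apply Rmult_le_compat_l; lra.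
  - apply level_bracket_small_argmin; fold K K'; try lra; [nra|rewrite Hwb; nra|].
    assert (tilt_argmin b T <= K' * rpow mu (/ b)).
    { rewrite <- (rpow_1 (tilt_argmin b T)) by apply rpow_ge0.
      replace 1 with (b * / b) by (field; lra). rewrite <- rpow_rpow by apply rpow_ge0.
      unfold K'. rewrite <- rpow_mult_distr by lra. apply rpow_le_l; auto.
      split; [apply rpow_ge0|]. unfold Rdiv in *; lra. }
    assert (0 <= K' * rpow mu (/ b)) by nra. nra.
Qed.

Lemma chord_length_large_angle : exists c1 c2, 0 < c1 /\ 0 < c2 /\
  forall A th lam, convex_body A -> boundary_is_graph b A -> 0 < lam ->
    rpow lam ((b - 1) / b) <= Rabs th -> Rabs th < 1/10 ->
    c1 * (sqrt lam * rpow (Rabs th) (flatness b)) <= chord_length A (th + PI/2) lam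
      <= c2 * (sqrt lam * rpow (Rabs th) (flatness b)).
Proof.
  set (Wcurved := 4 * (sqrt (8 / (b * (b - 1))) * rpow 2 (flatness b))).
  set (Wflat := 8 * (rpow 2 (/ (b - 1)) * rpow 2 (/ (b - 1)) + 2)
                  * rpow (16 / (b * (b - 1))) (/ b)).
  assert (0 <= Wcurved).
  { unfold Wcurved. pose proof (sqrt_pos (8 / (b * (b - 1)))).
    pose proof (rpow_ge0 2 (flatness b)). nra. }
  assert (0 < Wflat).
  { unfold Wflat. pose proof (rpow_ge0 2 (/ (b - 1))).
    pose proof (rpow_gt0 (16 / (b * (b - 1))) (/ b) ltac:(apply Rdiv_lt_0_compat; nra)). nra. }
  exists (rpow (1/4) (flatness b) / 2), (2 * (Wcurved + Wflat)).
  split; [pose proof (rpow_gt0 (1/4) (flatness b)); lra|split; [lra|]].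
  intros A th lam HA HG Hlam Ha Ha1.
  pose proof (rpow_gt0 lam ((b - 1) / b) Hlam).
  pose proof (lt_sqr_of_rpow_lt lam (1/10) Hlam ltac:(lra) ltac:(lra)).
  destruct (chord_length_reduction A th lam HA HG ltac:(lra) ltac:(lra))
    as [T [mu [HT [Hmu Hchord]]]].
  set (X := sqrt lam * rpow (Rabs th) (flatness b)) in *.
  assert (0 <= X) by (apply Rmult_le_pos; [apply sqrt_pos|apply rpow_ge0]).
  assert (Hbr : level_bracket b T mu ((Wcurved + Wflat) * X)).
  { destruct (Rle_lt_dec (16 * mu / (b * (b - 1))) (rpow (tilt_argmin b T) b)).
    - apply level_bracket_le with (Wcurved * X); [nra|].
      apply large_angle_bracket_curved; lra.
    - apply level_bracket_le with (Wflat * X); [nra|].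
      apply large_angle_bracket_flat; lra. }
  destruct (Hchord _ _ (large_angle_span T mu lam (Rabs th) ltac:(lra) ltac:(lra) ltac:(lra)
                         ltac:(lra) ltac:(lra)) Hbr) as [Hlo Hhi].
  fold X in Hlo. split; lra.
Qed.

End Scaling.

Lemma scaled_bounds_weaken c1 c2 c1' c2' X Y : 0 <= X -> c1' <= c1 -> c2 <= c2' ->
  c1 * X <= Y <= c2 * X -> c1' * X <= Y <= c2' * X.
Proof. intros HX H1 H2 [HY1 HY2]. split; nra. Qed.

Theorem proposition3p3 :
  exists c : R, 0 < c /\
  forall beta : R, 1 < beta < 2 ->
  exists c1 c2 : R, 0 < c1 /\ 0 < c2 /\
  forall A : pt -> Prop,
    convex_body A -> centrally_symmetric A -> y_axis_symmetric A ->
    boundary_is_graph beta A ->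
    forall theta lambda : R, 0 < lambda ->
      (Rabs theta < Rpower lambda ((beta - 1) / beta) ->
       Rpower lambda ((beta - 1) / beta) < c ->
         c1 * Rpower lambda (1 / beta)
           <= chord_length A (theta + PI / 2) lambda
           <= c2 * Rpower lambda (1 / beta)) /\
      (Rpower lambda ((beta - 1) / beta) <= Rabs theta ->
       Rabs theta < c ->
         c1 * (sqrt lambda * Rpower (Rabs theta) ((2 - beta) / (2 * (beta - 1))))
           <= chord_length A (theta + PI / 2) lambda
           <= c2 * (sqrt lambda * Rpower (Rabs theta) ((2 - beta) / (2 * (beta - 1))))).
Proof.
  exists (1/10). split; [lra|]. intros b Hb.
  destruct (chord_length_small_angle b Hb) as [c1 [c2 [Hc1 [Hc2 Hsmall]]]].
  destruct (chord_length_large_angle b Hb) as [d1 [d2 [Hd1 [Hd2 Hlarge]]]].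
  exists (Rmin c1 d1), (Rmax c2 d2).
  split; [now apply Rmin_glb_lt|split; [apply Rlt_le_trans with c2; [|apply Rmax_l]; lra|]].
  (* Only the shape of [A] near the origin matters. *)
  intros A HA _ _ HG th lam Hlam.
  rewrite <- !(rpow_Rpower lam) by auto. replace (1 / b) with (/ b) by (field; lra).
  split; intros Hth Hlam1.
  - apply scaled_bounds_weaken with c1 c2; auto using Rmin_l, Rmax_l, rpow_ge0.
  - pose proof (rpow_gt0 lam ((b - 1) / b) Hlam).
    rewrite <- rpow_Rpower by lra.
    apply scaled_bounds_weaken with d1 d2; auto using Rmin_r, Rmax_r.
    apply Rmult_le_pos; [apply sqrt_pos|apply rpow_ge0].
Qed.
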